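(* Let $\Phi:\{0,1\}^n\to\{0,1\}^n$, $\mu\in\{0,1\}^n$ and $\rho\in P_n$. Then: a) $\overline{W}[\Phi^\rho(\mu,\cdot)]=\overline{W}(Or_\rho(\mu))$; b) $\underline{W}[\Phi^\rho(\mu,\cdot)]\subset\underline{W}(Or_\rho(\mu))$; c) $\overline{W}[\omega_\rho(\mu)]=\overline{W}(\omega_\rho(\mu))$; d) $\underline{W}[\omega_\rho(\mu)]\subset\underline{W}(\omega_\rho(\mu))$.
   Context: Let $\mathbf{B}=\{0,1\}$ (discrete topology), $n\ge1$, $\Phi:\mathbf{B}^n\to\mathbf{B}^n$. For $\nu\in\mathbf{B}^n$: $\Phi^\nu_i(\mu)=\mu_i$ if $\nu_i=0$, $=\Phi_i(\mu)$ if $\nu_i=1$; $\Phi^{\alpha^0\dots\alpha^k}=\Phi^{\alpha^k}\circ\cdots\circ\Phi^{\alpha^0}$. A sequence $(\alpha^k)_{k\in\mathbf{N}}$ in $\mathbf{B}^n$ is progressive if each $\{k:\alpha^k_i=1\}$ is infinite. $Seq$ = strictly increasing real sequences unbounded above. $P_n$ = functions $\rho:\mathbf{R}\to\mathbf{B}^n$ with $\rho(t_k)=\alpha^k$, $\rho(t)=0$ for $t\notin\{t_k\}$, $\alpha$ progressive, $(t_k)\in Seq$. Orbit: $\Phi^\rho(\mu,t)=\mu$ for $t<t_0$, $=\Phi^{\alpha^0\dots\alpha^k}(\mu)$ for $t\in[t_k,t_{k+1})$; $Or_\rho(\mu)=\{\Phi^\rho(\mu,t):t\in\mathbf{R}\}$.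 $\omega_\rho(\mu)=\{\mu':\exists(s_k)\in Seq,\ \Phi^\rho(\mu,s_k)=\mu'$ for all large $k\}$. For a nonempty set $A\subset\mathbf{B}^n$: $\overline{W}(A)=\{\mu':\exists\rho'\in P_n,\ \omega_{\rho'}(\mu')\subset A\}$ and $\underline{W}(A)=\{\mu':\forall\rho'\in P_n,\ \omega_{\rho'}(\mu')\subset A\}$. Basins of the orbit and $\omega$-limit set: $\overline{W}[\Phi^\rho(\mu,\cdot)]=\{\mu':\exists\rho'\in P_n,\exists t',\forall t\ge t',\ \Phi^{\rho'}(\mu',t)=\Phi^\rho(\mu,t)\}$, $\underline{W}[\Phi^\rho(\mu,\cdot)]=\{\mu':\forall\rho'\in P_n,\exists t',\forall t\ge t',\ \Phi^{\rho'}(\mu',t)=\Phi^\rho(\mu,t)\}$, $\overline{W}[\omega_\rho(\mu)]=\{\mu':\exists\rho'\in P_n,\ \omega_{\rho'}(\mu')=\omega_\rho(\mu)\}$, $\underline{W}[\omega_\rho(\mu)]=\{\mu':\forall\rho'\in P_n,\ \omega_{\rho'}(\mu')=\omega_\rho(\mu)\}$. *)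

From mathcomp Require Import all_boot.
From Stdlib Require Import Reals ClassicalEpsilon.

Set Implicit Arguments.
Unset Strict Implicit.
Unset Printing Implicit Defensive.

Definition state (n : nat) := {ffun 'I_n -> bool}.

Definition sset (n : nat) := state n -> Prop.
Definition ssub n (A B : sset n) : Prop := forall x, A x -> B x.
Definition seqv n (A B : sset n) : Prop := forall x, A x <-> B x.

Section Dyn.
Variable n : nat.
Variable Phi : state n -> state n.

Definition phi_nu (nu : state n) (mu : state n) : state n :=
  [ffun i => if nu i then Phi mu i else mu i].

(* iter_app alpha k mu = Phi^{alpha^0 ... alpha^(k-1)} (mu); iter_app alpha 0 mu = mu *)
Fixpoint iter_app (alpha : nat -> state n) (k : nat) (mu : state n) : state n :=
  match k with
  | O => mu
  | S k' => phi_nu (alpha k') (iter_app alpha k' mu)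
  end.
End Dyn.

Definition progressive n (alpha : nat -> state n) : Prop :=
  forall (i : 'I_n) (k : nat), exists k', (k <= k')%N /\ alpha k' i = true.

Definition Seq (t : nat -> R) : Prop :=
  (forall k, (t k < t (S k))%R) /\ (forall M : R, exists k, (M < t k)%R).

(* An element of P_n, given by its data (alpha^k), (t_k):
   rho(t_k) = alpha^k and rho(t) = 0 elsewhere. *)
Record Pn (n : nat) := mkPn {
  p_alpha : nat -> state n;
  p_t : nat -> R;
  p_prog : progressive p_alpha;
  p_seq : Seq p_t }.

Definition rho_fun n (rho : Pn n) (s : R) : state n :=
  match excluded_middle_informative (exists k, p_t rho k = s) with
  | left _ => p_alpha rho (epsilon (inhabits 0%nat) (fun k => p_t rho k = s))
  | right _ => [ffun=> false]
  end.

Definition time_idx n (rho : Pn n) (s : R) : nat :=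
  epsilon (inhabits 0%nat) (fun k => (p_t rho k <= s < p_t rho (S k))%R).

Definition orbit n (Phi : state n -> state n) (rho : Pn n) (mu : state n) (s : R)
  : state n :=
  if Rlt_dec s (p_t rho 0) then mu
  else iter_app Phi (p_alpha rho) (S (time_idx rho s)) mu.

Definition Or n (Phi : state n -> state n) (rho : Pn n) (mu : state n) : sset n :=
  fun nu => exists s : R, orbit Phi rho mu s = nu.

Definition omega n (Phi : state n -> state n) (rho : Pn n) (mu : state n) : sset n :=
  fun nu => exists sk : nat -> R, Seq sk /\
    exists K, forall k, (K <= k)%N -> orbit Phi rho mu (sk k) = nu.

Definition Wbar n (Phi : state n -> state n) (A : sset n) : sset n :=
  fun mu' => exists rho' : Pn n, ssub (omega Phi rho' mu') A.
Definition Wund n (Phi : state n -> state n) (A : sset n) : sset n :=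
  fun mu' => forall rho' : Pn n, ssub (omega Phi rho' mu') A.

Definition Wbar_orb n (Phi : state n -> state n) (rho : Pn n) (mu : state n) : sset n :=
  fun mu' => exists rho' : Pn n, exists t' : R, forall t : R, (t' <= t)%R ->
    orbit Phi rho' mu' t = orbit Phi rho mu t.
Definition Wund_orb n (Phi : state n -> state n) (rho : Pn n) (mu : state n) : sset n :=
  fun mu' => forall rho' : Pn n, exists t' : R, forall t : R, (t' <= t)%R ->
    orbit Phi rho' mu' t = orbit Phi rho mu t.

Definition Wbar_om n (Phi : state n -> state n) (rho : Pn n) (mu : state n) : sset n :=
  fun mu' => exists rho' : Pn n, seqv (omega Phi rho' mu') (omega Phi rho mu).
Definition Wund_om n (Phi : state n -> state n) (rho : Pn n) (mu : state n) : sset n :=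
  fun mu' => forall rho' : Pn n, seqv (omega Phi rho' mu') (omega Phi rho mu).

(* Two facts drive all four statements.  First, the omega-limit set of any orbit is
   nonempty and consists of states actually reached by the orbit (the state space is
   finite, so some state recurs at arbitrarily late update times).  Second, orbits can
   be spliced: if a finite run of [rho'] from [mu'] reaches a state that the run of
   [rho] from [mu] reaches at step [j], then following [rho'] up to that point and
   [rho] from step [j] on gives an element of [P_n] whose orbit from [mu'] eventually
   coincides with the orbit of [mu] under [rho], hence has the same omega-limit set.
   Eventually coinciding orbits have equal omega-limit sets, and omega-limit sets are
   contained in orbits; the inclusions and equalities follow. *)
From Pilot Require Import Defs.
From mathcomp Require Import all_boot.
From mathcomp Require Import zify.
From Stdlib Require Import Reals Lra Lia Classical ClassicalEpsilon.

Set Implicit Arguments.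
Unset Strict Implicit.
Unset Printing Implicit Defensive.

Section SeqTheory.
Variable t : nat -> R.
Hypothesis tS : Seq t.

Lemma Seq_lt i j : (i < j)%N -> (t i < t j)%R.
Proof.
elim: j => // j IH; rewrite ltnS leq_eqVlt => /orP [/eqP -> | /IH lt_ij].
  exact: (proj1 tS).
exact: Rlt_trans lt_ij (proj1 tS j).
Qed.

Lemma Seq_le i j : (i <= j)%N -> (t i <= t j)%R.
Proof.
rewrite leq_eqVlt => /orP [/eqP -> | /Seq_lt]; [exact: Rle_refl | exact: Rlt_le].
Qed.

Lemma Seq_eventually_ge M : exists K, forall k, (K <= k)%N -> (M <= t k)%R.
Proof.
have [K ltMK] := proj2 tS M; exists K => k /Seq_le; lra.
Qed.

Lemma Seq_locate s : (t 0 <= s)%R -> exists k, (t k <= s < t k.+1)%R.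
Proof.
move=> le0s; have [N] := proj2 tS s; elim: N => [|N IH] ltsN; first lra.
case: (Rlt_dec s (t N)) => [/IH // | ?]; exists N; lra.
Qed.

End SeqTheory.

Lemma recurrent_value {T : finType} (x : nat -> T) :
  exists nu, forall N, exists k, (N <= k)%N && (x k == nu).
Proof.
apply: NNPP => never_recurs.
have /fin_all_exists [N N_avoids] :
    forall nu : T, exists N, forall k, (N <= k)%N -> x k <> nu.
  move=> nu; apply: NNPP => recurs; apply: never_recurs; exists nu => N.
  apply: NNPP => late; apply: recurs; exists N => k le_Nk xk_nu.
  by apply: late; exists k; rewrite le_Nk xk_nu eqxx.
exact: (N_avoids (x (\max_nu N nu)) _ (leq_bigmax _)).
Qed.

Lemma recurrent_subseq {T : finType} (x : nat -> T) :
  exists nu (g : nat -> nat),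
    [/\ forall m, (g m < g m.+1)%N, forall m, (m <= g m)%N & forall m, x (g m) = nu].
Proof.
have [nu recurs] := recurrent_value x.
pose f N := xchoose (recurs N).
have f_spec N : (N <= f N)%N /\ x (f N) = nu.
  by have /andP [-> /eqP] := xchooseP (recurs N).
pose g m := iter m (fun k => f k.+1) (f 0).
have g_incr m : (g m < g m.+1)%N by rewrite /g iterS; apply: (proj1 (f_spec _)).
exists nu, g; split=> // [m | [|m]]; last by apply: (proj2 (f_spec _)).
- by elim: m => // m IH; apply: leq_ltn_trans IH (g_incr m).
- by apply: (proj2 (f_spec _)).
Qed.

Section Orbits.
Variables (n : nat) (Phi : state n -> state n).

Lemma orbit_at (rho : Pn n) mu s k :
  (p_t rho k <= s < p_t rho k.+1)%R ->
  Defs.orbit Phi rho mu s = iter_app Phi (p_alpha rho) k.+1 mu.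
Proof.
move=> s_in_k; have tS := p_seq rho.
rewrite /Defs.orbit; destruct (Rlt_dec s (p_t rho 0)).
  by have := Seq_le tS (leq0n k); lra.
suff -> : time_idx rho s = k by [].
have : exists k', (p_t rho k' <= s < p_t rho k'.+1)%R by exists k.
move/(epsilon_spec (inhabits 0)); rewrite /time_idx; set e := epsilon _ _.
case: (ltngtP e k) => // [lt_ek | lt_ke] s_in_e.
- by have := Seq_le tS lt_ek; lra.
- by have := Seq_le tS lt_ke; lra.
Qed.

Lemma orbit_reached (rho : Pn n) mu s :
  exists j, Defs.orbit Phi rho mu s = iter_app Phi (p_alpha rho) j mu.
Proof. by rewrite /Defs.orbit; destruct (Rlt_dec s (p_t rho 0)); [exists 0 | eexists]. Qed.

Lemma omega_reached_nonempty (rho : Pn n) mu :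
  exists j, omega Phi rho mu (iter_app Phi (p_alpha rho) j mu).
Proof.
have tS := p_seq rho.
have [nu [g [g_incr g_ge g_nu]]] :=
  recurrent_subseq (fun k => iter_app Phi (p_alpha rho) k.+1 mu).
exists (g 0).+1; rewrite g_nu; exists (fun m => p_t rho (g m)); split; first split.
- by move=> m; apply: Seq_lt.
- move=> M; have [k ltMk] := proj2 tS M; exists k.
  by have := Seq_le tS (g_ge k); lra.
- exists 0 => k _; rewrite (@orbit_at rho mu _ (g k)) //; split; [lra | exact: (proj1 tS)].
Qed.

Lemma omega_sub_Or (rho : Pn n) mu : ssub (omega Phi rho mu) (Or Phi rho mu).
Proof. by move=> nu [sk [_ [K HK]]]; exists (sk K); apply: HK. Qed.

Lemma omega_eventually_sub (rho1 rho2 : Pn n) mu1 mu2 T :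
  (forall s, (T <= s)%R -> Defs.orbit Phi rho1 mu1 s = Defs.orbit Phi rho2 mu2 s) ->
  ssub (omega Phi rho1 mu1) (omega Phi rho2 mu2).
Proof.
move=> agree nu [sk [skS [K HK]]]; have [K' HK'] := Seq_eventually_ge skS T.
exists sk; split=> //; exists (K + K') => k le_k.
by rewrite -agree; [apply: HK | apply: HK']; lia.
Qed.

Lemma omega_eventually_sub_Or (rho1 rho2 : Pn n) mu1 mu2 T :
  (forall s, (T <= s)%R -> Defs.orbit Phi rho1 mu1 s = Defs.orbit Phi rho2 mu2 s) ->
  ssub (omega Phi rho1 mu1) (Or Phi rho2 mu2).
Proof. by move=> agree nu /(omega_eventually_sub agree); apply: omega_sub_Or. Qed.

(* The spliced element of [P_n]: the first [m] steps follow [beta], with update times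
   [t_j - m, ..., t_j - 1], after which the data of [rho] is followed from index [j]. *)
Section Splice.
Variables (rho : Pn n) (beta : nat -> state n) (m j : nat).

Definition splice_alpha k :=
  if (k < m)%N then beta k else p_alpha rho (k - m + j).

Definition splice_time k : R :=
  if (k < m)%N then (p_t rho j - INR (m - k))%R else p_t rho (k - m + j).

Lemma splice_progressive : progressive splice_alpha.
Proof.
move=> i k; have [k' [le_k' alpha_k']] := p_prog rho i (k + j).
exists (k' - j + m); rewrite /splice_alpha ifF; last lia.
by rewrite (_ : k' - j + m - m + j = k'); [split; first lia | lia].
Qed.

Lemma splice_Seq : Seq splice_time.
Proof.
have tS := p_seq rho; split=> [k | M].
- rewrite /splice_time; case: (ltnP k m) => [lt_km | le_mk].
  + case: ifPn => [lt_k1m | ?].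
      by rewrite (_ : m - k = (m - k.+1).+1) ?S_INR; [lra | lia].
    have -> : m - k = 1 by lia.
    have -> : k.+1 - m + j = j by lia.
    rewrite /= /INR; lra.
  + have -> : k.+1 - m + j = (k - m + j).+1 by lia.
    by rewrite ifF; [exact: (proj1 tS) | lia].
- have [k ltMk] := proj2 tS M; exists (k + m); rewrite /splice_time ifF; last lia.
  by apply: Rlt_le_trans ltMk (Seq_le tS _); lia.
Qed.

Definition splice : Pn n := mkPn splice_progressive splice_Seq.

Variables (mu mu' : state n).
Hypothesis meet : iter_app Phi beta m mu' = iter_app Phi (p_alpha rho) j mu.

Lemma iter_app_splice r :
  iter_app Phi splice_alpha (m + r) mu' = iter_app Phi (p_alpha rho) (j + r) mu.
Proof.
elim: r => [|r IH].
  rewrite !addn0 -meet; elim: {-2}m (leqnn m) => // k IH lt_km /=.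
  by rewrite IH ?(ltnW lt_km) // /splice_alpha lt_km.
rewrite !addnS /= IH /splice_alpha ifF; last lia.
by have -> : m + r - m + j = j + r by lia.
Qed.

Lemma orbit_splice s :
  (p_t rho j <= s)%R -> Defs.orbit Phi splice mu' s = Defs.orbit Phi rho mu s.
Proof.
move=> le_js; have tS := p_seq rho.
have [k s_in_k] : exists k, (p_t rho k <= s < p_t rho k.+1)%R.
  by apply: Seq_locate => //; have := Seq_le tS (leq0n j); lra.
have le_jk : (j <= k)%N.
  by rewrite leqNgt; apply/negP => /(Seq_le tS); lra.
rewrite (orbit_at mu s_in_k) (@orbit_at splice mu' s (m + (k - j))).
  by rewrite -addnS iter_app_splice; have -> : j + (k - j).+1 = k.+1 by lia.
rewrite /= /splice_time !ifF; [ | lia | lia].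
have -> : m + (k - j) - m + j = k by lia.
by have -> : (m + (k - j)).+1 - m + j = k.+1 by lia.
Qed.

End Splice.

Lemma Wbar_orb_of_reached (rho rho' : Pn n) mu mu' j' :
  Or Phi rho mu (iter_app Phi (p_alpha rho') j' mu') -> Wbar_orb Phi rho mu mu'.
Proof.
move=> [s orbit_s]; have [j reach_j] := orbit_reached rho mu s.
rewrite reach_j in orbit_s.
by exists (splice rho (p_alpha rho') j' j), (p_t rho j); apply: orbit_splice.
Qed.

Lemma Wbar_orb_sub_Wbar_om (rho : Pn n) mu :
  ssub (Wbar_orb Phi rho mu) (Wbar_om Phi rho mu).
Proof.
move=> mu' [rho' [T agree]]; exists rho' => nu; split.
  exact: omega_eventually_sub agree nu.
by apply: omega_eventually_sub nu => s /agree ->.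
Qed.

End Orbits.

Theorem theorem54 (n : nat) (hn : (0 < n)%N) (Phi : state n -> state n) (mu : state n) (rho : Pn n) :
  seqv (Wbar_orb Phi rho mu) (Wbar Phi (Or Phi rho mu)) /\
  ssub (Wund_orb Phi rho mu) (Wund Phi (Or Phi rho mu)) /\
  seqv (Wbar_om Phi rho mu) (Wbar Phi (omega Phi rho mu)) /\
  ssub (Wund_om Phi rho mu) (Wund Phi (omega Phi rho mu)).
Proof.
split; [|split; [|split]] => mu'.
- split=> [[rho' [T /omega_eventually_sub_Or]] | [rho' omega_sub]]; first by exists rho'.
  have [j' /omega_sub] := omega_reached_nonempty Phi rho' mu'.
  exact: Wbar_orb_of_reached.
- by move=> orb_agree rho'; have [T /omega_eventually_sub_Or] := orb_agree rho'.
- split=> [[rho' omega_eq] | [rho' omega_sub]]; first by exists rho' => nu /omega_eq.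
  have [j' /omega_sub /omega_sub_Or] := omega_reached_nonempty Phi rho' mu'.
  by move/Wbar_orb_of_reached; apply: Wbar_orb_sub_Wbar_om.
- by move=> omega_eq rho' nu /omega_eq.
Qed.
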